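(* Let $\Gamma$ be a finitely generated discrete group with finite symmetric generating set $Q$, and let $Z\subseteq\mathrm{Sub}(\Gamma)$ be a uniformly recurrent subgroup of $\Gamma$. For any $H,H'\in Z$, the topological groupoids $\mathcal{G}_H$ and $\mathcal{G}_{H'}$ (defined in the context) are isomorphic.
   Context: Word length $l(\gamma)$ is taken with respect to $Q$. $\mathrm{Sub}(\Gamma)$ is the space of subgroups of $\Gamma$ with the topology of pointwise convergence of indicator functions, with $\Gamma$ acting by conjugation $\gamma.H=\gamma H\gamma^{-1}$. A uniformly recurrent subgroup (URS) is a nonempty closed $\Gamma$-invariant subset $Z\subseteq\mathrm{Sub}(\Gamma)$ on which every $\Gamma$-orbit is dense. For $H\le\Gamma$, the Schreier graph $S(H)=S_\Gamma^Q(H)$ is the rooted labeled graph with vertex set $\Gamma/H$, root $H$, and for each $\gamma H\in\Gamma/H$ and $q\in Q$ an edge from $\gamma H$ to $q\gamma H$ labeled $q$; $d$ is the shortest-path metric and $B_n(S,p)$ the ball of radius $n$ around a vertex $p$. Two rooted labeled balls are root-label isomorphic if there is a graph isomorphism between them preserving roots and labels (such an isomorphism is unique). Construction of $\mathcal{G}_H$ for $H\in Z$: write $S=S(H)$. For $p\in\Gamma/H$ and $n\ge 0$ let $[p]_n$ be the root-label isomorphism class of the rooted labeled ball $(B_n(S,p),p)$, and let $E_n=\{[p]_n: p\in\Gamma/H\}$ (a finite discrete set), with maps $E_{n+1}\to E_n$, $[p]_{n+1}\mapsto[p]_n$. Let $\mathcal{G}_H^0=\varprojlim E_n$. For $x=(x_n)\in\mathcal{G}_H^0$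 choose vertices $p_n\in\Gamma/H$ with $x_n=[p_n]_n$. The arrows of $\mathcal{G}_H$ are equivalence classes of pairs $(x,\gamma)$ with $x\in\mathcal{G}_H^0$, $\gamma\in\Gamma$, where $(x,\gamma)\sim(x,\gamma')$ iff $\gamma p_n=\gamma' p_n$ for all sufficiently large $n$ (independent of choices). Range $r(x,\gamma)=x$; source $s(x,\gamma)=\gamma.x$, where $(\gamma.x)_n=[\gamma p_{n+l(\gamma)}]_n$; product $(x,\gamma')(\gamma'.x,\gamma)=(x,\gamma\gamma')$; inverse $(x,\gamma)^{-1}=(\gamma.x,\gamma^{-1})$; units are $(x,e)$. The topology on $\mathcal{G}_H$ is generated by the sets $U_{c,\gamma}=\{(x,\gamma): x_N=c\}$ for $N\in\mathbb{N}$, $c\in E_N$, $\gamma\in\Gamma$ with $l(\gamma)\le N$. *)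

From Stdlib Require Import List Arith ClassicalEpsilon.
Import ListNotations.

Set Implicit Arguments.

Record Grp := {
  carrier :> Type;
  gmul : carrier -> carrier -> carrier;
  ginv : carrier -> carrier;
  gone : carrier;
  gmulA : forall a b c, gmul a (gmul b c) = gmul (gmul a b) c;
  gmul1 : forall a, gmul gone a = a;
  gmulV : forall a, gmul (ginv a) a = gone }.

Section Defs.
Context {G : Grp}.
Local Notation "a * b" := (gmul G a b).
Local Notation "a ^-1" := (ginv G a) (at level 3).
Local Notation e := (gone G).

Definition is_subgroup (K : G -> Prop) : Prop :=
  K e /\ (forall a b, K a -> K b -> K (a * b)) /\ (forall a, K a -> K (a^-1)).

Definition conjsub (g : G) (K : G -> Prop) : G -> Prop :=
  fun x => K (g^-1 * x * g).

(** K and L have the same indicator function on the finite set F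
    (basic neighbourhoods of the topology of pointwise convergence) *)
Definition agree_on (F : list G) (K L : G -> Prop) : Prop :=
  forall x, In x F -> (K x <-> L x).

Record URS (Z : (G -> Prop) -> Prop) : Prop := {
  urs_sub : forall K, Z K -> is_subgroup K;
  urs_nonempty : exists K, Z K;
  urs_closed : forall L, is_subgroup L ->
      (forall F : list G, exists K, Z K /\ agree_on F K L) -> Z L;
  urs_invariant : forall g K, Z K -> Z (conjsub g K);
  urs_dense : forall K L, Z K -> Z L ->
      forall F : list G, exists g, agree_on F (conjsub g K) L }.

Definition symmetric_set (Q : list G) : Prop :=
  forall q, In q Q -> In (q^-1) Q.

Definition word_prod (w : list G) : G := fold_right (fun a b => a * b) e w.

Definition generates (Q : list G) : Prop :=
  forall g, exists w, incl w Q /\ word_prod w = g.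

Definition wl_le (Q : list G) (g : G) (n : nat) : Prop :=
  exists w, incl w Q /\ length w <= n /\ word_prod w = g.

Definition wordlen (Q : list G) (g : G) : nat :=
  epsilon (inhabits 0) (fun k => wl_le Q g k /\ forall j, wl_le Q g j -> k <= j).

(** aH = bH *)
Definition coseq (H : G -> Prop) (a b : G) : Prop := H (a^-1 * b).

(** the vertex bH lies in the ball B_n(S(H), aH) (edges γH -> qγH, q ∈ Q) *)
Definition in_ball (Q : list G) (H : G -> Prop) (n : nat) (a b : G) : Prop :=
  exists w, incl w Q /\ length w <= n /\ coseq H (word_prod w * a) b.

(** The rooted labeled balls (B_n(S(H),aH), aH) and (B_n(S(H),a'H), a'H)
    (induced labeled subgraphs) are root-label isomorphic: phi induces a
    bijection of vertex sets sending root to root, and the edge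
    (u --q--> qu) is present in the first ball iff (phi u --q--> q phi u)
    is present in the second, with phi (qu) = q phi u. *)
Definition ball_iso (Q : list G) (H : G -> Prop) (n : nat) (a a' : G) : Prop :=
  exists phi : G -> G,
    (forall b c, in_ball Q H n a b -> in_ball Q H n a c ->
        (coseq H b c <-> coseq H (phi b) (phi c))) /\
    (forall b, in_ball Q H n a b -> in_ball Q H n a' (phi b)) /\
    (forall b', in_ball Q H n a' b' -> exists b, in_ball Q H n a b /\ coseq H (phi b) b') /\
    coseq H (phi a) a' /\
    (forall b q, in_ball Q H n a b -> In q Q -> in_ball Q H n a (q * b) ->
        coseq H (phi (q * b)) (q * phi b)) /\
    (forall b q, in_ball Q H n a b -> In q Q -> in_ball Q H n a' (q * phi b) ->
        in_ball Q H n a (q * b)).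

(** A point x = (x_n) of G_H^0 = lim E_n, given by representatives p_n
    with x_n = [p_n]_n; compatibility: [p_{n+1}]_n = [p_n]_n. *)
Definition unit_pt (Q : list G) (H : G -> Prop) (x : nat -> G) : Prop :=
  forall n, ball_iso Q H n (x (S n)) (x n).

Definition ueq (Q : list G) (H : G -> Prop) (x y : nat -> G) : Prop :=
  forall n, ball_iso Q H n (x n) (y n).

Definition Arrow : Type := ((nat -> G) * G)%type.

Definition arr_valid Q H (a : Arrow) : Prop := unit_pt Q H (fst a).

Definition arr_eq Q H (a b : Arrow) : Prop :=
  ueq Q H (fst a) (fst b) /\
  exists N, forall n, N <= n -> coseq H (snd a * fst a n) (snd b * fst a n).

Definition act_pt (Q : list G) (g : G) (x : nat -> G) : nat -> G :=
  fun n => g * x (n + wordlen Q g).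

Definition arr_r (a : Arrow) : nat -> G := fst a.
Definition arr_s Q (a : Arrow) : nat -> G := act_pt Q (snd a) (fst a).

Definition composable Q H (a b : Arrow) : Prop := ueq Q H (arr_s Q a) (arr_r b).

(** (x,γ')(γ'.x,γ) = (x,γγ') *)
Definition arr_mul (a b : Arrow) : Arrow := (fst a, snd b * snd a).

(** subbasic open set U_{c,γ} with c = [p]_N *)
Definition in_U Q H (p : G) (N : nat) (g : G) (a : Arrow) : Prop :=
  exists y, unit_pt Q H y /\ ball_iso Q H N (y N) p /\ arr_eq Q H a (y, g).

Definition is_open Q H (O : Arrow -> Prop) : Prop :=
  forall a, arr_valid Q H a -> O a ->
    exists B : list (G * nat * G),
      (forall t, In t B -> wordlen Q (snd t) <= snd (fst t) /\
                            in_U Q H (fst (fst t)) (snd (fst t)) (snd t) a) /\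
      (forall b, arr_valid Q H b ->
         (forall t, In t B -> in_U Q H (fst (fst t)) (snd (fst t)) (snd t) b) -> O b).

Definition groupoid_top_iso (Q : list G) (H H' : G -> Prop) : Prop :=
  exists F : Arrow -> Arrow,
    (forall a, arr_valid Q H a -> arr_valid Q H' (F a)) /\
    (forall a b, arr_valid Q H a -> arr_valid Q H b ->
        (arr_eq Q H a b <-> arr_eq Q H' (F a) (F b))) /\
    (forall a', arr_valid Q H' a' -> exists a, arr_valid Q H a /\ arr_eq Q H' (F a) a') /\
    (forall a b, arr_valid Q H a -> arr_valid Q H b ->
        (composable Q H a b <-> composable Q H' (F a) (F b))) /\
    (forall a b, arr_valid Q H a -> arr_valid Q H b -> composable Q H a b ->
        arr_eq Q H' (F (arr_mul a b)) (arr_mul (F a) (F b))) /\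
    (forall O, is_open Q H' O -> is_open Q H (fun a => O (F a))) /\
    (forall O, is_open Q H O ->
        is_open Q H' (fun a' => exists a, arr_valid Q H a /\ O a /\ arr_eq Q H' (F a) a')).

End Defs.

From Stdlib Require Import List Lia ClassicalEpsilon Wf_nat.
Import ListNotations.

(* Two members H, H' of a URS look alike locally: by density of orbits, for
   every vertex aH of S(H) and every radius n some vertex a'H' of S(H') has a
   root-label isomorphic n-ball.  Fix such a choice a' = tr n a.  Every
   ingredient of G_H (points of G_H^0, the relation ~ on pairs (x, γ),
   sources, composability, the basic open sets U_{c,γ}) only inspects balls of
   bounded radius around the representatives p_n, so (p_n)_n, γ |-> (tr n p_n)_n, γ
   preserves and reflects all of it, and the choice in the opposite direction
   provides preimages. *)
Declare Scope grp_scope.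
Local Infix "*" := (gmul _) : grp_scope.
Local Notation "a ^-1" := (ginv _ a) (at level 3) : grp_scope.
Local Notation "1" := (gone _) : grp_scope.
Local Open Scope grp_scope.

Section GroupFacts.
Context {G : Grp}.
Implicit Types a b : G.

Lemma mulKg a b : a^-1 * (a * b) = b.
Proof. now rewrite gmulA, gmulV, gmul1. Qed.

Lemma mulgV a : a * a^-1 = 1.
Proof.
  rewrite <- (mulKg (a^-1) (a * a^-1)), (gmulA _ (a^-1) a), gmulV, gmul1.
  apply gmulV.
Qed.

Lemma mulg1 a : a * 1 = a.
Proof. now rewrite <- (gmulV G a), gmulA, mulgV, gmul1. Qed.

Lemma invgK a : a^-1^-1 = a.
Proof. now rewrite <- (mulg1 (a^-1^-1)), <- (gmulV G a), gmulA, gmulV, gmul1. Qed.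

Lemma invMg a b : (a * b)^-1 = b^-1 * a^-1.
Proof.
  assert (E : (a * b) * (b^-1 * a^-1) = 1).
  { now rewrite <- gmulA, (gmulA _ b), mulgV, gmul1, mulgV. }
  now rewrite <- (mulKg (a * b) (b^-1 * a^-1)), E, mulg1.
Qed.

End GroupFacts.

Section Cosets.
Context {G : Grp} (K : G -> Prop).

Lemma coseq_mul2l (g a b : G) : coseq K (g * a) (g * b) <-> coseq K a b.
Proof. unfold coseq. rewrite invMg, <- gmulA, mulKg. tauto. Qed.

Hypothesis SK : is_subgroup K.

Lemma coseq_refl (a : G) : coseq K a a.
Proof. unfold coseq. rewrite gmulV. apply SK. Qed.

Lemma coseq_sym (a b : G) : coseq K a b -> coseq K b a.
Proof.
  unfold coseq. intro h. apply SK in h. now rewrite invMg, invgK in h.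
Qed.

Lemma coseq_trans (a b c : G) : coseq K a b -> coseq K b c -> coseq K a c.
Proof.
  unfold coseq. intros hab hbc. pose proof (proj1 (proj2 SK) _ _ hab hbc) as h.
  now rewrite <- gmulA, (gmulA _ b), mulgV, gmul1 in h.
Qed.

Lemma coseq_congr (a a' b b' : G) :
  coseq K a a' -> coseq K b b' -> (coseq K a b <-> coseq K a' b').
Proof.
  intros ha hb. split; intro h.
  - apply coseq_trans with a; [now apply coseq_sym|]. now apply coseq_trans with b.
  - apply coseq_trans with a'; [easy|]. apply coseq_trans with b'; [easy|]. now apply coseq_sym.
Qed.

End Cosets.

Section WordLength.
Context {G : Grp} (Q : list G).

Lemma word_prod_app (w u : list G) : word_prod (w ++ u) = word_prod w * word_prod u.
Proof.
  induction w as [|q w IH]; simpl.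
  - now rewrite gmul1.
  - now rewrite IH, gmulA.
Qed.

Lemma wl_le_1 k : wl_le Q 1 k.
Proof. exists []. repeat split; [apply incl_nil_l | simpl; lia]. Qed.

Lemma wl_le_mono g k m : k <= m -> wl_le Q g k -> wl_le Q g m.
Proof. intros hkm [w [iw [lw ew]]]. exists w. repeat split; auto; lia. Qed.

Lemma wl_le_mul g h k m : wl_le Q g k -> wl_le Q h m -> wl_le Q (g * h) (k + m).
Proof.
  intros [w [iw [lw <-]]] [u [iu [lu <-]]]. exists (w ++ u).
  rewrite length_app, word_prod_app. repeat split; [now apply incl_app | lia].
Qed.

Lemma wl_le_cons q g k : In q Q -> wl_le Q g k -> wl_le Q (q * g) (S k).
Proof.
  intros hq [w [iw [lw <-]]]. exists (q :: w).
  repeat split; [now apply incl_cons | simpl; lia].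
Qed.

Lemma wl_le_S_cases g n : wl_le Q g (S n) ->
  wl_le Q g n \/ exists q g0, In q Q /\ wl_le Q g0 n /\ g = q * g0.
Proof.
  intros [[|q w] [iw [lw <-]]]; [left; apply wl_le_1 | right].
  apply incl_cons_inv in iw as [hq iw]. simpl in lw.
  exists q, (word_prod w). repeat split; auto. exists w. repeat split; auto; lia.
Qed.

Lemma wordlen_spec (hQ : generates Q) g : wl_le Q g (wordlen Q g).
Proof.
  destruct (dec_inh_nat_subset_has_unique_least_element (wl_le Q g))
    as [k [[hk hmin] _]]; [intro; apply classic | |].
  - destruct (hQ g) as [w [iw ew]]. exists (length w), w. auto.
  - unfold wordlen.
    apply (epsilon_spec (inhabits 0)
             (fun k => wl_le Q g k /\ forall j, wl_le Q g j -> k <= j)).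
    now exists k.
Qed.

Fixpoint wl_enum (k : nat) : list G :=
  match k with
  | 0 => [1]
  | S k => 1 :: flat_map (fun q => map (gmul G q) (wl_enum k)) Q
  end.

Lemma wl_enum_complete g k : wl_le Q g k -> In g (wl_enum k).
Proof.
  revert g; induction k as [|k IH]; intros g [[|q w] [iw [lw <-]]]; simpl in *.
  - now left.
  - lia.
  - now left.
  - right. apply incl_cons_inv in iw as [hq iw]. apply in_flat_map.
    exists q. split; auto. apply in_map, IH. exists w. repeat split; auto; lia.
Qed.

Lemma in_ballP (K : G -> Prop) n a b :
  in_ball Q K n a b <-> exists g, wl_le Q g n /\ coseq K (g * a) b.
Proof.
  split.
  - intros [w [iw [lw c]]]. exists (word_prod w). split; auto. now exists w.
  - intros [g [[w [iw [lw <-]]] c]]. now exists w.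
Qed.

End WordLength.

Section BallEquiv.
Context {G : Grp} (Q : list G).

(* [gaK |-> ga'K'] is a well-defined label-preserving bijection from the ball
   B_n(S(K), aK) onto B_n(S(K'), a'K'); words of length n+1 account for the
   edges leaving the ball. *)
Definition ball_equiv (K K' : G -> Prop) (n : nat) (a a' : G) : Prop :=
  forall g h, wl_le Q g (S n) -> wl_le Q h n ->
    (coseq K (g * a) (h * a) <-> coseq K' (g * a') (h * a')).

Lemma ball_equiv_refl K n a : ball_equiv K K n a a.
Proof. intros g h _ _. tauto. Qed.

Lemma ball_equiv_sym K K' n a a' : ball_equiv K K' n a a' -> ball_equiv K' K n a' a.
Proof. intros E g h hg hh. specialize (E g h hg hh). tauto. Qed.

Lemma ball_equiv_trans K1 K2 K3 n a1 a2 a3 :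
  ball_equiv K1 K2 n a1 a2 -> ball_equiv K2 K3 n a2 a3 -> ball_equiv K1 K3 n a1 a3.
Proof. intros E1 E2 g h hg hh. rewrite (E1 g h), (E2 g h) by auto. tauto. Qed.

Lemma ball_equiv_le K K' m n a a' : n <= m ->
  ball_equiv K K' m a a' -> ball_equiv K K' n a a'.
Proof.
  intros hnm E g h hg hh.
  apply E; [apply (wl_le_mono _ _ (S n)) | apply (wl_le_mono _ _ n)]; auto; lia.
Qed.

Lemma ball_equiv_mull K K' m n l g a a' : wl_le Q g l -> n + l <= m ->
  ball_equiv K K' m a a' -> ball_equiv K K' n (g * a) (g * a').
Proof.
  intros hg hl E h h' hh hh'. rewrite !gmulA.
  apply E; [apply (wl_le_mono _ _ (S n + l)) | apply (wl_le_mono _ _ (n + l))];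
    auto using wl_le_mul; lia.
Qed.

End BallEquiv.

Section BallIso.
Context {G : Grp} (Q : list G) (K : G -> Prop) (SK : is_subgroup K).

Lemma in_ball_mul n g a : wl_le Q g n -> in_ball Q K n a (g * a).
Proof. intro hg. apply in_ballP. exists g. auto using coseq_refl. Qed.

Definition ball_rep (n : nat) (a b : G) : G :=
  epsilon (inhabits 1) (fun g => wl_le Q g n /\ coseq K (g * a) b).

Lemma ball_rep_spec n a b : in_ball Q K n a b ->
  wl_le Q (ball_rep n a b) n /\ coseq K (ball_rep n a b * a) b.
Proof. intro hb. apply in_ballP in hb. exact (epsilon_spec _ _ hb). Qed.

Lemma ball_equiv_ball_iso n a a' : ball_equiv Q K K n a a' -> ball_iso Q K n a a'.
Proof.
  intro E. set (r b := ball_rep n a b).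
  assert (R : forall b, in_ball Q K n a b -> wl_le Q (r b) n /\ coseq K (r b * a) b)
    by exact (ball_rep_spec n a).
  assert (E' : forall g h, wl_le Q g n -> wl_le Q h n ->
                 (coseq K (g * a) (h * a) <-> coseq K (g * a') (h * a'))).
  { intros g h hg hh. apply E; auto. apply (wl_le_mono _ _ n); auto. }
  exists (fun b => r b * a'). refine (conj _ (conj _ (conj _ (conj _ (conj _ _))))).
  - intros b c hb hc. destruct (R b hb) as [hrb cb], (R c hc) as [hrc cc].
    rewrite <- E' by auto. apply (coseq_congr _ SK); auto using coseq_sym.
  - intros b hb. apply in_ball_mul, R, hb.
  - intros b' hb'. apply in_ballP in hb' as [g [hg cg]].
    exists (g * a). split; [now apply in_ball_mul|].
    destruct (R (g * a) (in_ball_mul n g a hg)) as [hr cr].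
    apply (coseq_trans _ SK) with (g * a'); auto. now apply E'.
  - assert (ha : in_ball Q K n a a).
    { apply in_ballP. exists 1. split; [apply wl_le_1 | rewrite gmul1; auto using coseq_refl]. }
    destruct (R a ha) as [hr cr].
    assert (c := E' (r a) 1 hr (wl_le_1 Q n)). rewrite !gmul1 in c. now apply c.
  - intros b q hb hq hqb. destruct (R b hb) as [hrb cb], (R _ hqb) as [hrqb cqb].
    rewrite gmulA. apply (coseq_sym _ SK).
    apply E; [now apply wl_le_cons | easy |].
    rewrite <- gmulA. apply (coseq_trans _ SK) with (q * b); [now apply coseq_mul2l|].
    now apply (coseq_sym _ SK).
  - intros b q hb hq hqb'. destruct (R b hb) as [hrb cb].
    apply in_ballP in hqb' as [h [hh ch]].
    apply in_ballP. exists h. split; auto.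
    apply (coseq_trans _ SK) with (q * (r b * a)); [|now apply coseq_mul2l].
    rewrite gmulA. apply (coseq_sym _ SK). apply E; [now apply wl_le_cons | easy |].
    rewrite <- gmulA. now apply (coseq_sym _ SK).
Qed.

Lemma ball_iso_ball_equiv n a a' : ball_iso Q K n a a' -> ball_equiv Q K K n a a'.
Proof.
  intros [phi [c1 [_ [_ [c4 [c5 c6]]]]]].
  assert (P : forall g, wl_le Q g n -> coseq K (phi (g * a)) (g * a')).
  { intros g [w [iw [lw <-]]]. induction w as [|q w IH]; simpl in *.
    - now rewrite !gmul1.
    - apply incl_cons_inv in iw as [hq iw].
      assert (hw : wl_le Q (word_prod w) n) by (exists w; repeat split; auto; lia).
      rewrite <- !gmulA.
      apply (coseq_trans _ SK) with (q * phi (word_prod w * a)); auto.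
      + apply c5; auto using in_ball_mul.
        rewrite gmulA. apply in_ball_mul. exists (q :: w). repeat split; auto.
        now apply incl_cons.
      + apply coseq_mul2l, IH; auto; lia. }
  intros g h hg hh.
  assert (inh := in_ball_mul n h a hh).
  destruct (wl_le_S_cases Q g n hg) as [hg' | [q [g0 [hq [hg0 ->]]]]].
  - rewrite (c1 _ _ (in_ball_mul n g a hg') inh). apply (coseq_congr _ SK); auto.
  - rewrite <- !gmulA. assert (hb := in_ball_mul n g0 a hg0).
    assert (claim : in_ball Q K n a (q * (g0 * a)) ->
      (coseq K (q * (g0 * a)) (h * a) <-> coseq K (q * (g0 * a')) (h * a'))).
    { intro hqb. rewrite (c1 _ _ hqb inh). apply (coseq_congr _ SK); auto.
      apply (coseq_trans _ SK) with (q * phi (g0 * a)); auto. now apply coseq_mul2l, P. }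
    split; intro c; apply claim; auto.
    + apply in_ballP. exists h. auto using coseq_sym.
    + apply (c6 _ q hb hq). apply in_ballP. exists h. split; auto.
      apply (coseq_sym _ SK), (coseq_trans _ SK) with (q * (g0 * a')); auto.
      apply coseq_mul2l. now apply P.
Qed.

Lemma ball_iso_iff n a a' : ball_iso Q K n a a' <-> ball_equiv Q K K n a a'.
Proof. split; [apply ball_iso_ball_equiv | apply ball_equiv_ball_iso]. Qed.

Lemma ball_iso_refl n a : ball_iso Q K n a a.
Proof. apply ball_iso_iff, ball_equiv_refl. Qed.

Lemma ball_iso_sym n a b : ball_iso Q K n a b -> ball_iso Q K n b a.
Proof. rewrite !ball_iso_iff. apply ball_equiv_sym. Qed.

Lemma ball_iso_trans n a b c :
  ball_iso Q K n a b -> ball_iso Q K n b c -> ball_iso Q K n a c.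
Proof. rewrite !ball_iso_iff. apply ball_equiv_trans. Qed.

End BallIso.

Section Transfer.
Context {G : Grp} (Q : list G) (K K' : G -> Prop).
Hypotheses (SK : is_subgroup K) (SK' : is_subgroup K').

Lemma ball_iso_transfer n a a' b b' :
  ball_equiv Q K K' n a a' -> ball_equiv Q K K' n b b' ->
  (ball_iso Q K n a b <-> ball_iso Q K' n a' b').
Proof.
  intros Ea Eb. rewrite (ball_iso_iff Q K SK), (ball_iso_iff Q K' SK').
  split; intro E.
  - apply ball_equiv_trans with (K2 := K) (a2 := a); [now apply ball_equiv_sym|].
    now apply ball_equiv_trans with (K2 := K) (a2 := b).
  - apply ball_equiv_trans with (K2 := K') (a2 := a'); [easy|].
    apply ball_equiv_trans with (K2 := K') (a2 := b'); [easy|].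
    now apply ball_equiv_sym.
Qed.

Lemma ueq_transfer x x' y y' :
  (forall n, ball_equiv Q K K' n (x n) (x' n)) ->
  (forall n, ball_equiv Q K K' n (y n) (y' n)) ->
  (ueq Q K x y <-> ueq Q K' x' y').
Proof.
  intros Ex Ey. split; intros E n;
    now apply (ball_iso_transfer n (x n) (x' n) (y n) (y' n)).
Qed.

End Transfer.

Lemma ball_equiv_exists {G : Grp} (Q : list G) (Z : (G -> Prop) -> Prop) (HZ : URS Z)
  K K' : Z K -> Z K' -> forall n a, exists a', ball_equiv Q K K' n a a'.
Proof.
  (* [gaK = haK] iff [g^-1 h] lies in [aKa^-1], so it suffices that a conjugate of
     K' agrees with [aKa^-1] on the finitely many [g^-1 h] with g, h short. *)
  intros ZK ZK' n a.
  set (F := flat_map (fun g => map (fun h => g^-1 * h) (wl_enum Q n)) (wl_enum Q (S n))).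
  destruct (urs_dense HZ K' (conjsub a K) ZK' (urs_invariant HZ a K ZK) F) as [a' ha'].
  exists a'. intros g h hg hh.
  assert (E : forall (L : G -> Prop) b, coseq L (g * b) (h * b) <-> conjsub b L (g^-1 * h)).
  { intros L b. unfold coseq, conjsub. rewrite invMg, !gmulA. tauto. }
  assert (hF : In (g^-1 * h) F).
  { apply in_flat_map. exists g. split; [now apply wl_enum_complete|].
    apply (in_map (fun h => g^-1 * h)). now apply wl_enum_complete. }
  rewrite !E. specialize (ha' _ hF). tauto.
Qed.

Definition transfer_choice {G : Grp} (Q : list G) (K K' : G -> Prop) (n : nat) (a : G) :
  G :=
  epsilon (inhabits a) (ball_equiv Q K K' n a).

Lemma transfer_choice_spec {G : Grp} (Q : list G) (Z : (G -> Prop) -> Prop) (HZ : URS Z)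
  K K' : Z K -> Z K' -> forall n a, ball_equiv Q K K' n a (transfer_choice Q K K' n a).
Proof.
  intros ZK ZK' n a. exact (epsilon_spec _ _ (ball_equiv_exists Q Z HZ K K' ZK ZK' n a)).
Qed.

Section Eventually.
Context {G : Grp} (Q : list G).

Definition eventually_coseq (K : G -> Prop) (s g : G) (x : nat -> G) : Prop :=
  exists N, forall n, N <= n -> coseq K (s * x n) (g * x n).

Lemma eventually_coseq_transfer (hQ : generates Q) K K' s g x x' :
  (forall n, ball_equiv Q K K' n (x n) (x' n)) ->
  (eventually_coseq K s g x <-> eventually_coseq K' s g x').
Proof.
  intro E. set (l := wordlen Q s + wordlen Q g).
  assert (El : forall n, l <= n ->
    (coseq K (s * x n) (g * x n) <-> coseq K' (s * x' n) (g * x' n))).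
  { intros n hn. apply E.
    - apply (wl_le_mono _ _ (wordlen Q s)); [lia | now apply wordlen_spec].
    - apply (wl_le_mono _ _ (wordlen Q g)); [lia | now apply wordlen_spec]. }
  split; intros [N hN]; exists (N + l); intros n hn.
  - rewrite <- El by lia. apply hN; lia.
  - rewrite El by lia. apply hN; lia.
Qed.

Context (K : G -> Prop) (SK : is_subgroup K).

Lemma eventually_coseq_sym s g x : eventually_coseq K s g x -> eventually_coseq K g s x.
Proof. intros [N hN]. exists N. intros n hn. apply (coseq_sym _ SK), hN, hn. Qed.

Lemma eventually_coseq_trans s g h x :
  eventually_coseq K s g x -> eventually_coseq K g h x -> eventually_coseq K s h x.
Proof.
  intros [N1 h1] [N2 h2]. exists (N1 + N2). intros n hn.
  apply (coseq_trans _ SK) with (g * x n); [apply h1 | apply h2]; lia.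
Qed.

End Eventually.

Section Arrows.
Context {G : Grp} (Q : list G) (K : G -> Prop).
Hypotheses (hQ : generates Q) (SK : is_subgroup K).

Lemma arr_eqE (a b : @Arrow G) :
  arr_eq Q K a b <-> ueq Q K (fst a) (fst b) /\ eventually_coseq K (snd a) (snd b) (fst a).
Proof. reflexivity. Qed.

Lemma arr_eq_refl a : arr_eq Q K a a.
Proof.
  split; [intro n; now apply ball_iso_refl |].
  exists 0. intros n _. now apply coseq_refl.
Qed.

Lemma ueq_ball_equiv x y : ueq Q K x y -> forall n, ball_equiv Q K K n (x n) (y n).
Proof. intros E n. now apply ball_iso_iff. Qed.

Lemma arr_eq_sym a b : arr_eq Q K a b -> arr_eq Q K b a.
Proof.
  rewrite !arr_eqE. intros [E ev]. split.
  - intro n. now apply ball_iso_sym.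
  - apply (eventually_coseq_transfer Q hQ K K _ _ (fst a)); [now apply ueq_ball_equiv|].
    now apply eventually_coseq_sym.
Qed.

Lemma arr_eq_trans a b c : arr_eq Q K a b -> arr_eq Q K b c -> arr_eq Q K a c.
Proof.
  rewrite !arr_eqE. intros [Eab evab] [Ebc evbc]. split.
  - intro n. now apply ball_iso_trans with (fst b n).
  - apply eventually_coseq_trans with (snd b); auto.
    apply (eventually_coseq_transfer Q hQ K K _ _ _ (fst b)); auto.
    now apply ueq_ball_equiv.
Qed.

Lemma in_U_valid_iff p N g a : arr_valid Q K a ->
  (in_U Q K p N g a <->
   ball_iso Q K N (fst a N) p /\ eventually_coseq K (snd a) g (fst a)).
Proof.
  intro va. split.
  - intros [y [_ [Ey [Eay evay]]]]. split; [|exact evay].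
    now apply ball_iso_trans with (y N).
  - intros [Ep ev]. exists (fst a). split; [exact va|]. split; [exact Ep|].
    split; [intro n; now apply ball_iso_refl | exact ev].
Qed.

Lemma in_U_arr_eq p N g a b : in_U Q K p N g a -> arr_eq Q K a b -> in_U Q K p N g b.
Proof.
  intros [y [vy [Ey Eay]]] Eab. exists y. split; [exact vy|]. split; [exact Ey|].
  apply arr_eq_trans with a; auto. now apply arr_eq_sym.
Qed.

End Arrows.

Section TransferMap.
Context {G : Grp} (Q : list G) (K K' : G -> Prop) (tr : nat -> G -> G).
Hypotheses (hQ : generates Q) (SK : is_subgroup K) (SK' : is_subgroup K')
  (Htr : forall n a, ball_equiv Q K K' n a (tr n a)).

Definition transfer_pt (x : nat -> G) : nat -> G := fun n => tr n (x n).

Definition transfer_arrow (a : @Arrow G) : @Arrow G := (transfer_pt (fst a), snd a).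

Definition transfer_basic (t : G * nat * G) : G * nat * G :=
  (tr (snd (fst t)) (fst (fst t)), snd (fst t), snd t).

Lemma arr_valid_transfer a : arr_valid Q K a -> arr_valid Q K' (transfer_arrow a).
Proof.
  intros va n.
  apply (ball_iso_transfer Q K K' SK SK' n (fst a (S n)) _ (fst a n));
    [apply ball_equiv_le with (S n); auto | apply Htr | apply va].
Qed.

Lemma arr_eq_transfer a b :
  arr_eq Q K a b <-> arr_eq Q K' (transfer_arrow a) (transfer_arrow b).
Proof.
  rewrite !arr_eqE. simpl.
  rewrite (ueq_transfer Q K K' SK SK' _ (transfer_pt (fst a)) _ (transfer_pt (fst b))) by auto.
  now rewrite (eventually_coseq_transfer Q hQ K K' _ _ _ (transfer_pt (fst a))).
Qed.

Lemma composable_transfer a b :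
  composable Q K a b <-> composable Q K' (transfer_arrow a) (transfer_arrow b).
Proof.
  apply ueq_transfer; auto. intro n.
  apply ball_equiv_mull with (n + wordlen Q (snd a)) (wordlen Q (snd a)); auto.
  now apply wordlen_spec.
Qed.

Lemma in_U_transfer p p' N g a : arr_valid Q K a -> ball_equiv Q K K' N p p' ->
  (in_U Q K p N g a <-> in_U Q K' p' N g (transfer_arrow a)).
Proof.
  intros va Ep.
  rewrite (in_U_valid_iff Q K SK), (in_U_valid_iff Q K' SK')
    by auto using arr_valid_transfer.
  simpl. rewrite (ball_iso_transfer Q K K' SK SK' N _ (tr N (fst a N)) p p') by auto.
  now rewrite (eventually_coseq_transfer Q hQ K K' _ _ _ (transfer_pt (fst a))).
Qed.

End TransferMap.

Section TransferIso.
Context {G : Grp} (Q : list G) (K K' : G -> Prop) (tr tr' : nat -> G -> G).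
Hypotheses (hQ : generates Q) (SK : is_subgroup K) (SK' : is_subgroup K')
  (Htr : forall n a, ball_equiv Q K K' n a (tr n a))
  (Htr' : forall n a', ball_equiv Q K' K n a' (tr' n a')).

Local Notation F := (transfer_arrow tr).
Local Notation F' := (transfer_arrow tr').

Lemma transfer_arrowK d : arr_eq Q K' (F (F' d)) d.
Proof.
  split; [| exists 0; intros n _; now apply coseq_refl].
  intro n. apply (ball_iso_iff Q K' SK'), ball_equiv_sym.
  now apply ball_equiv_trans with (K2 := K) (a2 := tr' n (fst d n)).
Qed.

Lemma transfer_open_preimage O : is_open Q K' O -> is_open Q K (fun a => O (F a)).
Proof.
  intros HO a va Oa.
  destruct (HO (F a) (arr_valid_transfer Q K K' tr SK SK' Htr a va) Oa)
    as [B [HB1 HB2]].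
  assert (pull : forall p' N g b, arr_valid Q K b ->
            (in_U Q K (tr' N p') N g b <-> in_U Q K' p' N g (F b))).
  { intros p' N g b vb. apply (in_U_transfer Q K K' tr); auto using ball_equiv_sym. }
  exists (map (transfer_basic tr') B). split.
  - intros t Ht. apply in_map_iff in Ht as [[[p' N] g] [<- Ht]].
    destruct (HB1 _ Ht) as [hl hU]. simpl in *. split; [exact hl|]. now apply pull.
  - intros b vb Hall. apply HB2; [now apply (arr_valid_transfer Q K K' tr)|].
    intros [[p' N] g] Ht. apply pull; [exact vb|].
    exact (Hall _ (in_map (transfer_basic tr') _ _ Ht)).
Qed.

Lemma transfer_open_image O : is_open Q K O ->
  is_open Q K' (fun d => exists a, arr_valid Q K a /\ O a /\ arr_eq Q K' (F a) d).
Proof.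
  intros HO d vd [a [va [Oa Ead]]].
  destruct (HO a va Oa) as [B [HB1 HB2]].
  assert (push : forall p N g b, arr_valid Q K b ->
            (in_U Q K p N g b <-> in_U Q K' (tr N p) N g (F b))).
  { intros p N g b vb. now apply (in_U_transfer Q K K' tr). }
  exists (map (transfer_basic tr) B). split.
  - intros t Ht. apply in_map_iff in Ht as [[[p N] g] [<- Ht]].
    destruct (HB1 _ Ht) as [hl hU]. simpl in *. split; [exact hl|].
    apply (in_U_arr_eq Q K' hQ SK') with (F a); [now apply push | exact Ead].
  - intros e ve Hall.
    assert (vF'e : arr_valid Q K (F' e)) by now apply (arr_valid_transfer Q K' K tr').
    exists (F' e). split; [exact vF'e|]. split; [|apply transfer_arrowK].
    apply HB2; [exact vF'e|]. intros [[p N] g] Ht. apply push; [exact vF'e|].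
    apply (in_U_arr_eq Q K' hQ SK') with e.
    + exact (Hall _ (in_map (transfer_basic tr) _ _ Ht)).
    + apply (arr_eq_sym Q K' hQ SK'), transfer_arrowK.
Qed.

Lemma groupoid_top_iso_of_transfer : groupoid_top_iso Q K K'.
Proof.
  exists F. refine (conj _ (conj _ (conj _ (conj _ (conj _ (conj _ _)))))).
  - intros a va. now apply (arr_valid_transfer Q K K' tr).
  - intros a b _ _. now apply (arr_eq_transfer Q K K' tr).
  - intros d vd. exists (F' d).
    split; [now apply (arr_valid_transfer Q K' K tr') | apply transfer_arrowK].
  - intros a b _ _. now apply (composable_transfer Q K K' tr).
  - intros a b _ _ _. now apply arr_eq_refl.
  - apply transfer_open_preimage.
  - apply transfer_open_image.
Qed.

End TransferIso.

Theorem proposition3p2 (G : Grp) (Q : list G)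
  (HQsym : symmetric_set Q) (HQgen : generates Q)
  (Z : (G -> Prop) -> Prop) (HZ : URS Z)
  (H H' : G -> Prop) (HH : Z H) (HH' : Z H') :
  groupoid_top_iso Q H H'.
Proof.
  apply groupoid_top_iso_of_transfer
    with (tr := transfer_choice Q H H') (tr' := transfer_choice Q H' H).
  - exact HQgen.
  - exact (urs_sub HZ H HH).
  - exact (urs_sub HZ H' HH').
  - exact (transfer_choice_spec Q Z HZ H H' HH HH').
  - exact (transfer_choice_spec Q Z HZ H' H HH' HH).
Qed.
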